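(* Let $F \subseteq \mathbb{Z}_2^\omega$ be a thin set. Then Ego has no winning strategy in the game $\mathcal{G}(F)$.
   Context: $\mathbb{Z}_2^\omega$ is the set of infinite binary sequences indexed by $\omega=\{0,1,2,\dots\}$; $\mathbb{Z}_2^+=\bigcup_{n\ge1}\mathbb{Z}_2^n$ is the set of nonempty finite binary words. A set $T\subseteq\mathbb{Z}_2^\omega$ is thin if for every $n\in\omega$ the map $x\mapsto x|_{\omega\setminus\{n\}}$ is injective on $T$ (equivalently, no two distinct elements of $T$ differ in exactly one coordinate). For $F\subseteq \mathbb{Z}_2^\omega$, $\mathcal{G}(F)$ is the following infinite two-player game of perfect information: players Ego and Alter alternately choose words in $\mathbb{Z}_2^+$, Ego moving first; if the moves are $\epsilon_0,\alpha_1,\epsilon_1,\alpha_2,\epsilon_2,\dots$, the outcome is the concatenation $\epsilon_0\alpha_1\epsilon_1\alpha_2\epsilon_2\cdots\in\mathbb{Z}_2^\omega$. Ego wins if the outcome lies in $F$, otherwise Alter wins. A strategy for Ego is a function $e:\bigcup_{n\ge0}(\mathbb{Z}_2^+)^n\to\mathbb{Z}_2^+$ (giving $\epsilon_0=e(\emptyset)$, $\epsilon_i=e(\alpha_1,\dots,\alpha_i)$), and a strategy for Alter is a function $a:\bigcup_{n\ge1}(\mathbb{Z}_2^+)^n\to\mathbb{Z}_2^+$ (giving $\alpha_i=a(\epsilon_0,\dots,\epsilon_{i-1})$). A strategy of Ego is winning if every play in which Ego follows it has outcome in $F$; a strategy of Alter is winning if every play in which Alter follows it has outcome not in $F$. 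*)

From mathcomp Require Import all_boot.
Set Implicit Arguments. Unset Strict Implicit. Unset Printing Implicit Defensive.

Definition cantor := nat -> bool.

Definition word := {w : seq bool | 0 < size w}.

(* thin: no two distinct elements differ in exactly one coordinate, i.e.
   for each n, x |-> x restricted to omega\{n} is injective on T. *)
Definition thin (T : cantor -> Prop) : Prop :=
  forall (n : nat) (x y : cantor), T x -> T y ->
    (forall m, m <> n -> x m = y m) -> x = y.

Definition ego_strategy := seq word -> word.

(* Given Ego's strategy e and Alter's moves alpha : nat -> word
   (alpha i is alpha_{i+1}), the i-th Ego move eps_i = e(alpha_1,...,alpha_i). *)
Definition ego_move (e : ego_strategy) (alpha : nat -> word) (i : nat) : word :=
  e (mkseq alpha i).

Definition moves (e : ego_strategy) (alpha : nat -> word) (k : nat) : seq bool :=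
  if odd k then val (alpha k./2) else val (ego_move e alpha k./2).

(* The outcome: the infinite concatenation of all moves.  Since every move is
   nonempty, the first n+1 moves already have length >= n+1. *)
Definition outcome_of (w : nat -> seq bool) : cantor :=
  fun n => nth false (flatten (mkseq w n.+1)) n.

Definition ego_outcome (e : ego_strategy) (alpha : nat -> word) : cantor :=
  outcome_of (moves e alpha).

(* e is winning for Ego in G(F): every play where Ego follows e ends in F.
   Plays consistent with e are exactly determined by Alter's moves alpha. *)
Definition ego_winning (F : cantor -> Prop) (e : ego_strategy) : Prop :=
  forall alpha : nat -> word, F (ego_outcome e alpha).

(** Copycat argument.  Given a strategy e of Ego with first move ε0, Alter
   runs two plays of e side by side: in play A he answers ε0 with the bit 0,
   in play B with the bit 1 followed by Ego's reply ε1 from play A;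
   afterwards each play's Alter copies Ego's latest move from the other play.
   Both outcomes are then ε0 b ε1 ε1' ε2 ε2' ... with b = 0 resp. b = 1, so
   they differ exactly at coordinate |ε0|, and a thin set cannot contain
   both. *)
From mathcomp Require Import all_boot.

Lemma mkseqD (T : Type) (f : nat -> T) m n :
  mkseq f (m + n) = mkseq f m ++ mkseq (fun k => f (m + k)) n.
Proof. by rewrite /mkseq iotaD map_cat -[in iota m n](addn0 m) iotaDl -map_comp. Qed.

Lemma mkseq_last_rcons (T : Type) (x0 a : T) (L : nat -> seq T) (f : nat -> T) :
  L 0 = [:: a] -> (forall k, L k.+1 = rcons (L k) (f k)) ->
  forall k, mkseq (fun j => last x0 (L j)) k.+1 = L k.
Proof.
move=> L0 LS; elim=> [|k IHk]; first by rewrite /mkseq /= L0.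
by rewrite mkseqS IHk LS last_rcons.
Qed.

Lemma size_flatten_mkseq (T : Type) (w : nat -> seq T) :
  (forall k, 0 < size (w k)) -> forall m, m <= size (flatten (mkseq w m)).
Proof.
move=> w_ne; elim=> [|m IHm] //.
by rewrite mkseqS flatten_rcons size_cat -addn1 leq_add.
Qed.

Definition prefix_of (s : seq bool) (x : cantor) : Prop :=
  forall i, i < size s -> x i = nth false s i.

Lemma prefix_of_catl (s t : seq bool) (x : cantor) :
  prefix_of (s ++ t) x -> prefix_of s x.
Proof.
move=> st_x i i_lt; rewrite st_x ?nth_cat ?i_lt // size_cat.
exact: leq_trans i_lt (leq_addr _ _).
Qed.

Lemma outcome_of_prefix (w : nat -> seq bool) :
  (forall k, 0 < size (w k)) -> forall m, prefix_of (flatten (mkseq w m)) (outcome_of w).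
Proof.
move=> w_ne m i i_lt.
have nth_ext n k : i < size (flatten (mkseq w n)) ->
    nth false (flatten (mkseq w (n + k))) i = nth false (flatten (mkseq w n)) i.
  by rewrite mkseqD flatten_cat nth_cat => ->.
rewrite /outcome_of -(nth_ext i.+1 m); last exact: size_flatten_mkseq.
by rewrite addnC nth_ext.
Qed.

Lemma size_moves (e : ego_strategy) (alpha : nat -> word) k : 0 < size (moves e alpha k).
Proof. by rewrite /moves; case: ifP => _; [case: (alpha _) | case: (ego_move _ _ _)]. Qed.

Lemma flatten_moves (e : ego_strategy) (alpha : nat -> word) k :
  flatten (mkseq (moves e alpha) k.*2) =
  flatten (mkseq (fun j => val (ego_move e alpha j) ++ val (alpha j)) k).
Proof.
elim: k => [|k IHk] //.
rewrite doubleS !mkseqS !flatten_rcons IHk -catA /moves /=.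
by rewrite odd_double doubleK uphalf_double.
Qed.

Lemma ego_outcome_prefix (e : ego_strategy) (alpha : nat -> word) k :
  prefix_of (flatten (mkseq (fun j => val (ego_move e alpha j) ++ val (alpha j)) k))
            (ego_outcome e alpha).
Proof. by rewrite -flatten_moves; apply/outcome_of_prefix/size_moves. Qed.

Lemma agree_off_prefixes (x y : cantor) (u : seq bool) (b b' : bool) :
  (forall m, exists2 s, m <= size s &
     prefix_of (u ++ b :: s) x /\ prefix_of (u ++ b' :: s) y) ->
  forall i, i <> size u -> x i = y i.
Proof.
move=> prefixes i i_ne; have [s i_le [xs ys]] := prefixes i.
have i_lt c : i < size (u ++ c :: s).
  by rewrite size_cat addnS ltnS (leq_trans i_le (leq_addl _ _)).
rewrite xs ?ys ?i_lt // !nth_cat.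
case: ltngtP i_ne => // u_lt _.
by rewrite -(subnSK u_lt).
Qed.

Section MirrorPlays.
Variable e : ego_strategy.

Definition word_false : word := exist _ [:: false] erefl.
Definition cons_true (w : word) : word := exist _ (true :: val w) erefl.

(* [mirror k] holds Alter's first k+1 moves in plays A and B: each new Alter
   move is Ego's answer to the current history of the other play. *)
Fixpoint mirror (k : nat) : seq word * seq word :=
  match k with
  | 0 => ([:: word_false], [:: cons_true (e [:: word_false])])
  | k.+1 => let a := rcons (mirror k).1 (e (mirror k).2) in
            (a, rcons (mirror k).2 (e a))
  end.

Definition alterA j := last word_false (mirror j).1.
Definition alterB j := last word_false (mirror j).2.

Lemma mkseq_alterA k : mkseq alterA k.+1 = (mirror k).1.
Proof. exact: mkseq_last_rcons. Qed.

Lemma mkseq_alterB k : mkseq alterB k.+1 = (mirror k).2.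
Proof. exact: mkseq_last_rcons. Qed.

Definition common_tail k : seq bool :=
  flatten (mkseq (fun j => val (e (mirror j).1) ++ val (e (mirror j).2)) k).

Lemma rounds_alterA k :
  flatten (mkseq (fun j => val (ego_move e alterA j) ++ val (alterA j)) k.+1) =
  val (e [::]) ++ false :: common_tail k.
Proof.
elim: k => [|k IHk]; first by rewrite /common_tail /mkseq /= cats0.
rewrite mkseqS flatten_rcons IHk /common_tail mkseqS flatten_rcons.
by rewrite /ego_move mkseq_alterA /alterA last_rcons -!catA.
Qed.

Lemma rounds_alterB k :
  flatten (mkseq (fun j => val (ego_move e alterB j) ++ val (alterB j)) k.+1) =
  val (e [::]) ++ true :: common_tail k ++ val (e (mirror k).1).
Proof.
elim: k => [|k IHk]; first by rewrite /common_tail /mkseq /= cats0.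
rewrite mkseqS flatten_rcons IHk /common_tail mkseqS flatten_rcons.
by rewrite /ego_move mkseq_alterB /alterB /= last_rcons -!catA /= -!catA.
Qed.

Lemma mirror_outcomes_differ_once (u := val (e [::]))
    (x := ego_outcome e alterA) (y := ego_outcome e alterB) :
  (forall i, i <> size u -> x i = y i) /\ x (size u) <> y (size u).
Proof.
have prefixes m : exists2 s, m <= size s &
    prefix_of (u ++ false :: s) x /\ prefix_of (u ++ true :: s) y.
  exists (common_tail m).
    apply: size_flatten_mkseq => j.
    by case: (e (mirror j).1) => s /= s_ne; rewrite size_cat ltn_addr.
  split; first by rewrite -rounds_alterA; apply: ego_outcome_prefix.
  apply: (@prefix_of_catl _ (val (e (mirror m).1))).
  by rewrite -catA -rounds_alterB; apply: ego_outcome_prefix.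
split; first exact: agree_off_prefixes prefixes.
have [s _ [xs ys]] := prefixes 0.
have u_lt c : size u < size (u ++ c :: s) by rewrite size_cat addnS ltnS leq_addr.
by rewrite xs ?ys ?u_lt // !nth_cat ltnn subnn.
Qed.

End MirrorPlays.

Theorem proposition6 (F : cantor -> Prop) :
  thin F -> ~ exists e : ego_strategy, ego_winning F e.
Proof.
move=> thinF [e winning].
have [agree differ] := mirror_outcomes_differ_once e.
by apply: differ; rewrite (thinF _ _ _ (winning _) (winning _) agree).
Qed.
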